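(* Let $G=(V,E,\Omega)$ be a connected finite graph with vertex set $V\subset\mathbb{R}^n$, edge set $E$ and a non-empty set $\Omega\subset V$, let $f:\Omega\to\mathbb{R}$, and let $u:V\to\mathbb{R}$ be the Kirszbraun extension of $f$ on $G$. Then $$\sup_{x,y\in V,\,x\neq y}\frac{|u(x)-u(y)|}{d_g(x,y)}\le\sup_{x,y\in\Omega,\,x\ne y}\frac{|f(x)-f(y)|}{d_g(x,y)},$$ and $\inf_{z\in\Omega}f(z)\le u(x)\le\sup_{z\in\Omega}f(z)$ for all $x\in V$.
   Context: For $x\in V$, $S(x):=\{y\in V:(x,y)\in E\}$; $\|\cdot\|$ is the Euclidean norm. For a finite set $A\subset\mathbb{R}^n$, $g:A\to\mathbb{R}$ and $x\in\mathbb{R}^n\setminus A$, $K(g,A)(x)$ is the unique $y\in\mathbb{R}$ minimizing $\sup_{a\in A}|g(a)-y|/\|a-x\|$. A Kirszbraun extension of $f$ on $G$ is a function $u:V\to\mathbb{R}$ with $u=f$ on $\Omega$ and $u(x)=K(u,S(x))(x)$ for all $x\in V\setminus\Omega$ (such $u$ exists and is unique in this real-valued setting). The geodesic metric $d_g$ of $G$: for $x,y\in V$, $d_g(x,y)$ is the infimum of $\sum_{i=1}^{k-1}\|x_{i+1}-x_i\|$ over all chains $x_1=x,x_2,\dots,x_k=y$ in $V$ with $x_i\in S(x_{i+1})$ for $i=1,\dots,k-1$. *)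

From HB Require Import structures.
From mathcomp Require Import all_boot all_order all_algebra.
From mathcomp Require Import classical_sets reals.
Set Implicit Arguments. Unset Strict Implicit. Unset Printing Implicit Defensive.
Import Order.TTheory GRing.Theory Num.Theory.
Local Open Scope ring_scope.
Local Open Scope classical_set_scope.

Definition normE {R : realType} {n : nat} (v : 'rV[R]_n) : R :=
  Num.sqrt (\sum_(i < n) (v ord0 i) ^+ 2).

(* The graph: vertices are a finType T, embedded injectively into R^n by pos;
   E is the edge relation; S(x) = {y | (x,y) \in E}. *)
Definition nbhd {T : finType} (E : rel T) (x : T) : {set T} := [set y | E x y].

Definition connected_simple_graph {T : finType} (E : rel T) : Prop :=
  (forall x y, E x y = E y x) /\ (forall x, ~~ E x x) /\
  (forall x y, connect E x y).

(* sup_{a in A} |g(a) - y| / ||a - x|| (finite A; 0 if A is empty). *)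
Definition Kobj {R : realType} {n : nat} {T : finType} (pos : T -> 'rV[R]_n)
  (g : T -> R) (A : {set T}) (x : T) (y : R) : R :=
  \big[Num.max/0]_(a in A) (`|g a - y| / normE (pos a - pos x)).

(* y = K(g,A)(x): y minimizes Kobj (the minimizer is unique). *)
Definition is_K {R : realType} {n : nat} {T : finType} (pos : T -> 'rV[R]_n)
  (g : T -> R) (A : {set T}) (x : T) (y : R) : Prop :=
  forall z : R, Kobj pos g A x y <= Kobj pos g A x z.

Definition kirszbraun_ext {R : realType} {n : nat} {T : finType}
  (pos : T -> 'rV[R]_n) (E : rel T) (Omega : {set T}) (f u : T -> R) : Prop :=
  (forall x, x \in Omega -> u x = f x) /\
  (forall x, x \notin Omega -> is_K pos u (nbhd E x) x (u x)).

(* Length of the chain x = x_1, x_2, ..., x_k (p = [x_2; ...; x_k]). *)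
Fixpoint chain_len {R : realType} {n : nat} {T : finType}
  (pos : T -> 'rV[R]_n) (x : T) (p : seq T) : R :=
  match p with
  | [::] => 0
  | y :: p' => normE (pos y - pos x) + chain_len pos y p'
  end.

(* Geodesic metric: inf over chains x_1 = x, ..., x_k = y with
   x_i \in S(x_{i+1}), i.e. E x_{i+1} x_i. *)
Definition dg {R : realType} {n : nat} {T : finType}
  (pos : T -> 'rV[R]_n) (E : rel T) (x y : T) : R :=
  inf [set l : R | exists p : seq T,
         [/\ path (fun a b => E b a) x p, last x p = y & l = chain_len pos x p]].

(* Lipschitz constant w.r.t. d_g on a vertex set W:
   sup_{x,y in W, x <> y} |g x - g y| / d_g(x,y)  (0 for an empty index set). *)
Definition lip_dg {R : realType} {n : nat} {T : finType}
  (pos : T -> 'rV[R]_n) (E : rel T) (W : {set T}) (g : T -> R) : R :=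
  sup [set q : R | exists x y, [/\ x \in W, y \in W, x != y &
         q = `|g x - g y| / dg pos E x y]].

(* Let [L] be the largest slope [|u b - u a| / |b - a|] over the edges of the
   graph; chaining edges gives [|u x - u y| <= L d_g(x, y)].  Call an edge steep
   when [u] increases along it with slope exactly [L].  Since [u x] minimises the
   largest slope towards the neighbours of [x], at a vertex outside [Omega] a
   steep edge coming in forces a steep edge going out, and conversely.  As [u]
   increases strictly along steep edges, following them forward and backward
   from one steep edge ends at two vertices of [Omega] joined by a steep chain,
   on which the [d_g]-ratio of [f] is at least [L].  The same minimality gives a
   maximum principle: a top level set of [u] missing [Omega] would be closed
   under edges, which contradicts connectedness; the lower bound follows for
   [- u]. *)

From HB Require Import structures.
From mathcomp Require Import all_boot all_order all_algebra.
From mathcomp Require Import classical_sets reals.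
From mathcomp Require Import lra.
Import Order.TTheory GRing.Theory Num.Theory.
Local Open Scope ring_scope.
Local Open Scope classical_set_scope.

Section EuclideanNorm.
Variables (R : realType) (n : nat).

Lemma normE_ge0 (v : 'rV[R]_n) : 0 <= normE v.
Proof. exact: sqrtr_ge0. Qed.

Lemma normE_subC (v w : 'rV[R]_n) : normE (v - w) = normE (w - v).
Proof.
rewrite /normE -opprB; congr Num.sqrt; apply: eq_bigr => i _.
by rewrite mxE sqrrN.
Qed.

Lemma normE_sub_gt0 (v w : 'rV[R]_n) : v != w -> 0 < normE (v - w).
Proof.
move=> vw; rewrite lt_neqAle normE_ge0 andbT eq_sym /normE sqrtr_eq0 -ltNge.
apply: contraNT vw; rewrite -leNgt => sum_le0.
have sum0 : \sum_(i < n) ((v - w) ord0 i) ^+ 2 = 0.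
  by apply/eqP; rewrite eq_le sum_le0 sumr_ge0 // => i _; rewrite sqr_ge0.
have /(_ _ isT) := psumr_eq0P (fun i _ => sqr_ge0 ((v - w) ord0 i)) sum0.
move=> coord0; apply/eqP/matrixP => i j; rewrite (ord1 i).
by have /eqP := coord0 j; rewrite sqrf_eq0 !mxE subr_eq0 => /eqP.
Qed.

End EuclideanNorm.

Section KirszbraunOperator.
Context {R : realType} {n : nat} {T : finType} {pos : T -> 'rV[R]_n}.

Lemma le_Kobj (g : T -> R) (A : {set T}) x y c : c \in A ->
  `|g c - y| / normE (pos c - pos x) <= Kobj pos g A x y.
Proof. exact: le_bigmax_cond. Qed.

Lemma Kobj_lt (g : T -> R) (A : {set T}) x y L : 0 < L ->
  (forall b, b \in A -> `|g b - y| / normE (pos b - pos x) < L) ->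
  Kobj pos g A x y < L.
Proof. by move=> L_gt0 lt_L; apply/bigmax_ltP. Qed.

Lemma Kobj_opp (g : T -> R) A x y :
  Kobj pos (fun t => - g t) A x (- y) = Kobj pos g A x y.
Proof. by apply: eq_bigr => b _; rewrite -opprD normrN. Qed.

Lemma is_K_opp (g : T -> R) A x y :
  is_K pos g A x y -> is_K pos (fun t => - g t) A x (- y).
Proof. by move=> gK z; rewrite Kobj_opp -[z]opprK Kobj_opp. Qed.

Lemma kirszbraun_ext_opp [E : rel T] [Omega : {set T}] [f u : T -> R] :
  kirszbraun_ext pos E Omega f u ->
  kirszbraun_ext pos E Omega (fun t => - f t) (fun t => - u t).
Proof.
move=> [u_f uK]; split => [x /u_f -> // | x xO].
exact/is_K_opp/uK.
Qed.

Section Steepness.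
Context {g : T -> R} {A : {set T}} {a : T}.
Let d b := normE (pos b - pos a).
Hypothesis gK : is_K pos g A a (g a).
Hypothesis d_gt0 : forall b, b \in A -> 0 < d b.

(* If no neighbour were reached with the maximal slope [L] upwards, lowering
   the value at [a] by half the smallest gap would make every slope smaller
   than [L], contradicting the minimality of [g a]. *)
Lemma is_K_steep_out [c L] : 0 < L ->
  (forall b, b \in A -> `|g b - g a| <= L * d b) ->
  c \in A -> g a - g c = L * d c ->
  exists2 b, b \in A & g b - g a = L * d b.
Proof.
move=> L_gt0 slope_le cA gc.
have [/exists_inP [b bA /eqP steep_b] | /exists_inPn not_steep] :=
  boolP [exists b in A, g b - g a == L * d b]; first by exists b.
pose gap b := L * d b - (g b - g a).
have gap_gt0 b : b \in A -> 0 < gap b.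
  move=> bA; rewrite subr_gt0 lt_neqAle not_steep //=.
  by have := slope_le b bA; rewrite ler_norml => /andP [].
case: (arg_minP gap cA) => b0 b0A gap_min.
have gap0_gt0 := gap_gt0 b0 b0A.
have L_le : L <= Kobj pos g A a (g a).
  apply: le_trans (le_Kobj g A a (g a) c cA).
  rewrite distrC gc ger0_norm; last by rewrite mulr_ge0 ?ltW ?d_gt0.
  by rewrite mulfK // gt_eqF // d_gt0.
have shift_lt : Kobj pos g A a (g a - gap b0 / 2) < L.
  apply: Kobj_lt => // b bA; rewrite ltr_pdivrMr ?d_gt0 // -/(d b) ltr_norml.
  have := slope_le b bA; rewrite ler_norml => /andP [lo hi].
  move: (gap_min b bA) gap0_gt0; rewrite /gap => gap_le gap0_gt0'.
  apply/andP; split; lra.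
by have := le_lt_trans (le_trans L_le (gK _)) shift_lt; rewrite ltxx.
Qed.

Lemma is_K_local_max :
  (forall b, b \in A -> g b <= g a) -> forall b, b \in A -> g b = g a.
Proof.
move=> le_ga b bA; apply/eqP; rewrite eq_le le_ga //= leNgt; apply/negP => lt_b.
pose slope b := `|g b - g a| / d b.
case: (arg_maxP slope bA) => c cA slope_max.
have slope_gt0 : 0 < slope c.
  apply: lt_le_trans (slope_max b bA).
  by rewrite divr_gt0 ?d_gt0 // normr_gt0 subr_eq0 lt_eqF.
have [b' b'A steep_b'] : exists2 b', b' \in A & g b' - g a = slope c * d b'.
  apply: (is_K_steep_out slope_gt0 _ cA).
  - by move=> b2 b2A; rewrite -ler_pdivrMr ?d_gt0 //; exact: slope_max.
  - by rewrite divfK ?gt_eqF ?d_gt0 // distrC ger0_norm // subr_ge0 le_ga.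
have := le_ga b' b'A; rewrite -subr_le0 steep_b' leNgt.
by rewrite mulr_gt0 ?d_gt0.
Qed.

End Steepness.

End KirszbraunOperator.

Section IncreasingWalks.
Context {R : realType} {T : finType} {st : rel T} {phi : T -> R}.
Hypothesis st_lt : forall a b, st a b -> phi a < phi b.

Lemma connect_le [a b] : connect st a b -> phi a <= phi b.
Proof.
case/connectP => p + ->; elim: p a => [|c p IHp] a //= /andP [ac cp].
exact: le_trans (ltW (st_lt _ _ ac)) (IHp c cp).
Qed.

(* An st-walk entering [B]'s complement can always be continued; since [phi]
   increases strictly, the reachable vertex of largest potential is in [B]. *)
Lemma exists_reachable_in (B : pred T) :
  (forall a c, ~~ B a -> st c a -> exists b, st a b) ->
  forall x y, st x y -> exists2 z, B z & connect st y z.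
Proof.
move=> continue x y xy.
pose P z := connect st y z && [exists w, st w z].
have Py : P y by rewrite /P connect0; apply/existsP; exists x.
case: (arg_maxP phi Py) => z /andP [yz /existsP [w wz]] z_max.
exists z => //; apply/negPn/negP => zB.
have [b zb] := continue z w zB wz.
have Pb : P b.
  by rewrite /P (connect_trans yz (connect1 zb)); apply/existsP; exists z.
by have := lt_le_trans (st_lt _ _ zb) (z_max b Pb); rewrite ltxx.
Qed.

End IncreasingWalks.

Lemma exists_reaching_in {R : realType} {T : finType} {st : rel T}
    {phi : T -> R} (B : pred T) :
  (forall a b, st a b -> phi a < phi b) ->
  (forall a c, ~~ B a -> st a c -> exists b, st b a) ->
  forall x y, st x y -> exists2 z, B z & connect st z x.
Proof.
move=> st_lt extend x y xy.
have st'_lt a b : [rel a b | st b a] a b -> - phi a < - phi b.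
  by rewrite ltrN2; exact: st_lt.
have [z zB xz] := exists_reachable_in st'_lt B extend y x xy.
by exists z => //; rewrite (connect_rev st x z) in xz.
Qed.

Section Graph.
Context {R : realType} {n : nat} {T : finType} {pos : T -> 'rV[R]_n} {E : rel T}.
Hypothesis pos_inj : injective pos.
Hypothesis E_sym : symmetric E.
Hypothesis E_irr : irreflexive E.
Hypothesis E_connect : forall x y, connect E x y.

Local Notation dist a b := (normE (pos b - pos a)).

Lemma dist_gt0 [a b] : a != b -> 0 < dist a b.
Proof.
move=> ab; apply: normE_sub_gt0; apply: contra ab => /eqP /pos_inj ->.
exact: eqxx.
Qed.

Lemma edge_neq [a b] : E a b -> a != b.
Proof. by apply: contraTneq => ->; rewrite E_irr. Qed.

Lemma nbhd_dist_gt0 a [b] : b \in nbhd E a -> 0 < dist a b.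
Proof. by rewrite inE => /edge_neq /dist_gt0. Qed.

Lemma chain_len_ge0 x p : 0 <= chain_len pos x p.
Proof. by elim: p x => //= y p IHp x; rewrite addr_ge0 ?normE_ge0. Qed.

Lemma path_converse x p : path (fun a b => E b a) x p = path E x p.
Proof. by apply: eq_path => a b; rewrite E_sym. Qed.

Lemma le_dg x y c :
  (forall p, path E x p -> last x p = y -> c <= chain_len pos x p) ->
  c <= dg pos E x y.
Proof.
move=> le_chain; apply: lb_le_inf.
  have /connectP [p xp y_last] := E_connect x y.
  by exists (chain_len pos x p), p; rewrite path_converse.
by move=> _ [p [xp y_last ->]]; apply: le_chain; rewrite -?path_converse.
Qed.

Lemma dg_le_chain_len x p :
  path E x p -> dg pos E x (last x p) <= chain_len pos x p.
Proof.
move=> xp; apply: ge_inf; last by exists p; rewrite path_converse.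
by exists 0 => _ [q [_ _ ->]]; exact: chain_len_ge0.
Qed.

(* Every chain leaving [x] starts with an edge at least as long as the
   distance from [x] to its nearest other vertex. *)
Lemma dg_gt0 x y : x != y -> 0 < dg pos E x y.
Proof.
move=> xy; have yx : y != x by rewrite eq_sym.
case: (@arg_minP _ _ _ y (fun b => b != x) (fun b => dist x b) yx) => b bx b_min.
apply: lt_le_trans (dist_gt0 (_ : x != b)) _; first by rewrite eq_sym.
apply: le_dg => -[|c p] /=; first by move=> _ yx'; rewrite yx' eqxx in xy.
case/andP => /edge_neq; rewrite eq_sym => /b_min ? _ _.
by rewrite -[leLHS]addr0 lerD ?chain_len_ge0.
Qed.

Section LipschitzConstant.
Variables (W : {set T}) (g : T -> R).
Local Notation ratio x y := (`|g x - g y| / dg pos E x y).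

Lemma le_lip_dg [x y] :
  x \in W -> y \in W -> x != y -> ratio x y <= lip_dg pos E W g.
Proof.
move=> xW yW xy; apply: ub_le_sup; last by exists x, y.
exists (\big[Order.max/0]_(p : T * T) ratio p.1 p.2).
by move=> _ [a [b [_ _ _ ->]]]; exact: (le_bigmax _ _ (a, b)).
Qed.

Lemma lip_dg_ge0 : 0 <= lip_dg pos E W g.
Proof.
rewrite /lip_dg; set S := [set q | _].
have [->|/set0P [_ [x [y [xW yW xy _]]]]] := eqVneq S set0; first by rewrite sup0.
apply: le_trans (le_lip_dg xW yW xy).
by rewrite divr_ge0 ?normr_ge0 ?ltW ?dg_gt0.
Qed.

Lemma lip_dg_le L : 0 <= L ->
  (forall x y, x \in W -> y \in W -> x != y -> ratio x y <= L) ->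
  lip_dg pos E W g <= L.
Proof.
move=> L_ge0 ratio_le; rewrite /lip_dg; set S := [set q | _].
have [->|/set0P S_neq0] := eqVneq S set0; first by rewrite sup0.
by apply: ge_sup => // _ [x [y [xW yW xy ->]]]; exact: ratio_le.
Qed.

End LipschitzConstant.

Definition edge_slope (g : T -> R) a b := `|g b - g a| / dist a b.

Definition max_edge_slope (g : T -> R) :=
  \big[Order.max/0]_(p : T * T | E p.1 p.2) edge_slope g p.1 p.2.

Definition steep (g : T -> R) a b :=
  E a b && (g b - g a == max_edge_slope g * dist a b).

Section MaxEdgeSlope.
Variable g : T -> R.
Local Notation L := (max_edge_slope g).

Lemma max_edge_slope_ge0 : 0 <= L.
Proof. exact: bigmax_ge_id. Qed.

Lemma edge_diff_le [a b] : E a b -> `|g b - g a| <= L * dist a b.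
Proof.
move=> ab; rewrite -ler_pdivrMr ?dist_gt0 ?edge_neq //.
exact: (@le_bigmax_cond _ _ _ 0 (a, b) (fun p : T * T => E p.1 p.2) _ ab).
Qed.

Lemma chain_diff_le [x p] : path E x p ->
  `|g (last x p) - g x| <= L * chain_len pos x p.
Proof.
elim: p x => [|y p IHp] x /=; first by rewrite subrr normr0 mulr0.
case/andP => xy yp; rewrite mulrDr [leRHS]addrC.
apply: le_trans (lerD (IHp y yp) (edge_diff_le xy)).
by rewrite (le_trans _ (ler_normD _ _)) // addrA subrK.
Qed.

Lemma diff_le_max_edge_slope_dg x y : `|g y - g x| <= L * dg pos E x y.
Proof.
have [L0|L_neq0] := eqVneq L 0.
  have /connectP [p xp ->] := E_connect x y.
  by have := chain_diff_le xp; rewrite L0 !mul0r.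
have L_gt0 : 0 < L by rewrite lt_def L_neq0 max_edge_slope_ge0.
rewrite mulrC -ler_pdivrMr //; apply: le_dg => p xp <-.
by rewrite ler_pdivrMr // mulrC chain_diff_le.
Qed.

Lemma lip_dg_le_max_edge_slope : lip_dg pos E [set: T] g <= L.
Proof.
apply: lip_dg_le max_edge_slope_ge0 _ => x y _ _ xy.
by rewrite ler_pdivrMr ?dg_gt0 // distrC diff_le_max_edge_slope_dg.
Qed.

Lemma exists_steep_edge : 0 < L -> exists a b, steep g a b.
Proof.
case: (pickP (fun p : T * T => E p.1 p.2)) => [p0 Ep0 L_gt0|noE]; last first.
  by rewrite /max_edge_slope big_pred0 ?ltxx.
have slope_ge0 p : 0 <= edge_slope g p.1 p.2.
  by rewrite divr_ge0 ?normr_ge0 ?normE_ge0.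
have [[a b] /[!unfold_in] /= ab Lab] :=
  eq_bigmax p0 (fun p : T * T => E p.1 p.2) _ Ep0 (fun p _ => slope_ge0 p).
have dist_ab := dist_gt0 (edge_neq ab).
have diff_ab : `|g b - g a| = L * dist a b.
  by rewrite /max_edge_slope Lab divfK ?gt_eqF.
have [le_ab|lt_ba] := leP (g a) (g b).
  by exists a, b; rewrite /steep ab -diff_ab ger0_norm ?subr_ge0 ?eqxx.
exists b, a; rewrite /steep E_sym ab normE_subC -diff_ab ltr0_norm ?subr_lt0 //.
by rewrite opprB eqxx.
Qed.

Lemma steep_lt a b : 0 < L -> steep g a b -> g a < g b.
Proof.
move=> L_gt0 /andP [ab /eqP diff_ab].
by rewrite -subr_gt0 diff_ab mulr_gt0 ?dist_gt0 ?edge_neq.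
Qed.

Lemma steep_path a q : path (steep g) a q ->
  path E a q /\ g (last a q) - g a = L * chain_len pos a q.
Proof.
elim: q a => [|c q IHq] a /=; first by rewrite subrr mulr0.
case/andP => /andP [ac /eqP diff_ac] /IHq [cq diff_cq].
split; first by rewrite ac.
by rewrite mulrDr -diff_cq -diff_ac [RHS]addrC addrA subrK.
Qed.

Lemma max_edge_slope_le_ratio [x y] : connect (steep g) x y -> x != y ->
  L <= `|g x - g y| / dg pos E x y.
Proof.
case/connectP => p /steep_path [xp diff_xy] -> xy.
have L_ge0 := max_edge_slope_ge0.
rewrite ler_pdivlMr ?dg_gt0 // distrC diff_xy.
rewrite ger0_norm ?mulr_ge0 ?chain_len_ge0 //.
by rewrite ler_wpM2l ?dg_le_chain_len.
Qed.

End MaxEdgeSlope.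

Lemma max_edge_slope_opp g : max_edge_slope (fun t => - g t) = max_edge_slope g.
Proof. by apply: eq_bigr => p _; rewrite /edge_slope -opprD normrN. Qed.

Lemma steep_opp g a b : steep (fun t => - g t) a b = steep g b a.
Proof.
by rewrite /steep max_edge_slope_opp E_sym normE_subC opprK addrC.
Qed.

Lemma kirszbraun_steep_out {Omega : {set T}} {f u : T -> R} a c :
  kirszbraun_ext pos E Omega f u -> 0 < max_edge_slope u ->
  a \notin Omega -> steep u c a -> exists b, steep u a b.
Proof.
case=> _ uK L_gt0 aO /andP [ca /eqP diff_ca].
have slope_le b : b \in nbhd E a -> `|u b - u a| <= max_edge_slope u * dist a b.
  by rewrite inE; exact: edge_diff_le.
have ca' : c \in nbhd E a by rewrite inE E_sym.
have [|b] := is_K_steep_out (uK a aO) (nbhd_dist_gt0 a) L_gt0 slope_le ca'.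
  by rewrite normE_subC.
by rewrite inE => ab diff_ab; exists b; rewrite /steep ab diff_ab eqxx.
Qed.

Lemma kirszbraun_steep_in {Omega : {set T}} {f u : T -> R} a c :
  kirszbraun_ext pos E Omega f u -> 0 < max_edge_slope u ->
  a \notin Omega -> steep u a c -> exists b, steep u b a.
Proof.
move=> u_ext L_gt0 aO ac.
have [||b] :=
  kirszbraun_steep_out _ _ (kirszbraun_ext_opp u_ext) _ aO (_ : steep _ c a).
- by rewrite max_edge_slope_opp.
- by rewrite steep_opp.
- by rewrite steep_opp; exists b.
Qed.

Lemma kirszbraun_lip_dg {Omega : {set T}} {f u : T -> R} :
  kirszbraun_ext pos E Omega f u ->
  lip_dg pos E [set: T] u <= lip_dg pos E Omega f.
Proof.
move=> u_ext; apply: le_trans (lip_dg_le_max_edge_slope u) _.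
have [->|L_neq0] := eqVneq (max_edge_slope u) 0; first exact: lip_dg_ge0.
have L_gt0 : 0 < max_edge_slope u by rewrite lt_def L_neq0 max_edge_slope_ge0.
have st_lt a b : steep u a b -> u a < u b by exact: steep_lt.
have [x0 [y0 st0]] := exists_steep_edge u L_gt0.
have [z2 z2O y0z2] := exists_reachable_in st_lt (mem Omega)
  (fun a c => kirszbraun_steep_out a c u_ext L_gt0) _ _ st0.
have [z1 z1O z1x0] := exists_reaching_in (mem Omega) st_lt
  (fun a c => kirszbraun_steep_in a c u_ext L_gt0) _ _ st0.
have z1z2 : connect (steep u) z1 z2.
  exact: connect_trans z1x0 (connect_trans (connect1 st0) y0z2).
have lt_z12 : u z1 < u z2.
  apply: le_lt_trans (connect_le st_lt z1x0) _.
  exact: lt_le_trans (st_lt _ _ st0) (connect_le st_lt y0z2).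
have z1_neq_z2 : z1 != z2 by apply: contraTneq lt_z12 => ->; rewrite ltxx.
apply: le_trans (max_edge_slope_le_ratio u z1z2 z1_neq_z2) _.
by case: u_ext => u_f _; rewrite !u_f //; exact: le_lip_dg.
Qed.

Lemma kirszbraun_le_max {Omega : {set T}} {f u : T -> R} :
  (exists z, z \in Omega) -> kirszbraun_ext pos E Omega f u ->
  forall x, exists2 z, z \in Omega & u x <= f z.
Proof.
move=> [z0 z0O] [u_f uK] x.
case: (arg_maxP f z0O) => zM zMO f_max.
case: (@arg_maxP _ _ _ x predT u isT) => xm _ u_max.
exists zM => //; apply: le_trans (u_max x isT) _.
rewrite leNgt; apply/negP => f_lt.
pose top := [pred y | u y == u xm].
have top_out y : y \in top -> y \notin Omega.
  rewrite inE => /eqP uy; apply: contraTN f_lt => yO.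
  by rewrite -leNgt -uy u_f //; exact: f_max.
have top_closed : closed E top.
  apply: (intro_closed (sym_connect_sym E_sym)) => y w yw /[dup] /top_out yO.
  rewrite !inE => /eqP uy; apply/eqP; rewrite -uy.
  apply: (is_K_local_max (uK y yO) (nbhd_dist_gt0 y)); last by rewrite inE.
  by move=> b _; rewrite uy; exact: u_max.
have := closed_connect top_closed (E_connect xm zM).
rewrite !inE eqxx => /esym/eqP uzM.
by move: f_lt; rewrite -u_f // uzM ltxx.
Qed.

Lemma kirszbraun_ge_min {Omega : {set T}} {f u : T -> R} :
  (exists z, z \in Omega) -> kirszbraun_ext pos E Omega f u ->
  forall x, exists2 z, z \in Omega & f z <= u x.
Proof.
move=> Omega_n0 u_ext x.
have [z zO] := kirszbraun_le_max Omega_n0 (kirszbraun_ext_opp u_ext) x.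
by rewrite lerN2; exists z.
Qed.

End Graph.

Lemma le_sup_image {R : realType} {T : finType} (A : set T) (g : T -> R) z :
  A z -> g z <= sup (g @` A).
Proof.
move=> Az; apply: ub_le_sup; last by exists z.
by exists (\big[Order.max/0]_t g t) => _ [t _ <-]; exact: le_bigmax.
Qed.

Lemma inf_image_le {R : realType} {T : finType} (A : set T) (g : T -> R) z :
  A z -> inf (g @` A) <= g z.
Proof.
move=> Az; apply: ge_inf; last by exists z.
by exists (\big[Order.min/0]_t g t) => _ [t _ <-]; exact: bigmin_le.
Qed.

Theorem mainTheorem4 (R : realType) (n : nat) (T : finType)
  (pos : T -> 'rV[R]_n) (E : rel T) (Omega : {set T}) (f u : T -> R) :
  injective pos ->
  connected_simple_graph E ->
  (exists z, z \in Omega) ->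
  kirszbraun_ext pos E Omega f u ->
  lip_dg pos E [set: T] u <= lip_dg pos E Omega f /\
  (forall x : T,
     inf [set f z | z in [set z | z \in Omega]] <= u x /\
     u x <= sup [set f z | z in [set z | z \in Omega]]).
Proof.
move=> pos_inj [E_sym [E_nloop E_connect]] Omega_n0 u_ext.
have E_irr : irreflexive E by move=> x; exact: negbTE.
split; first exact: (kirszbraun_lip_dg pos_inj E_sym E_irr E_connect u_ext).
move=> x; split.
  have [z zO fz_le] :=
    kirszbraun_ge_min pos_inj E_sym E_irr E_connect Omega_n0 u_ext x.
  by apply: le_trans fz_le; apply: inf_image_le.
have [z zO le_fz] :=
  kirszbraun_le_max pos_inj E_sym E_irr E_connect Omega_n0 u_ext x.
by apply: le_trans le_fz _; apply: le_sup_image.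
Qed.
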